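(* The set of properties consisting of $EV$ (the even permutations) and $EL$ (the permutations of even length) is query-complete.
   Context: For $\sigma\in S_m$ and nonempty permutations $\alpha_1,\dots,\alpha_m$, the inflation $\sigma[\alpha_1,\dots,\alpha_m]$ is the permutation obtained by replacing each entry $\sigma(i)$ by an interval (contiguous positions, consecutive values) order-isomorphic to $\alpha_i$. A property is any set of permutations. A set $\mathcal{P}$ of properties is query-complete if for every permutation $\sigma\in S_m$ and every $P\in\mathcal{P}$, whether $\sigma[\alpha_1,\dots,\alpha_m]\in P$ is determined by $\sigma$ together with the knowledge, for each $i\in[m]$ and each $Q\in\mathcal{P}$, of whether $\alpha_i\in Q$. *)

From mathcomp Require Import all_boot all_fingroup.
Set Implicit Arguments. Unset Strict Implicit. Unset Printing Implicit Defensive.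

(* Permutations are written in one-line notation, 0-based: a permutation of
   length n is a list s of naturals that is a rearrangement of 0,...,n-1. *)
Definition is_perm (s : seq nat) : bool := perm_eq s (iota 0 (size s)).

Definition property := seq nat -> bool.

(* The mathcomp permutation of 'I_(size s) with one-line notation s
   (meaningful when is_perm s). *)
Definition perm_of_seq (s : seq nat) : {perm 'I_(size s)} :=
  insubd (1%g : {perm 'I_(size s)})
    [ffun i : 'I_(size s) => (insubd i (nth 0 s i) : 'I_(size s))].

Definition EV : property := fun s => ~~ odd_perm (perm_of_seq s).

Definition EL : property := fun s => ~~ odd (size s).

(* Inflation sigma[alpha_0, ..., alpha_(m-1)]: the block for position i is
   alpha_i shifted by the total size of the alpha_j with sigma(j) < sigma(i). *)
Definition infl_offset (sigma : seq nat) (alphas : seq (seq nat)) (i : nat) : nat :=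
  sumn [seq size (nth [::] alphas j) |
         j <- iota 0 (size sigma) & nth 0 sigma j < nth 0 sigma i].

Definition inflate (sigma : seq nat) (alphas : seq (seq nat)) : seq nat :=
  flatten [seq [seq x + infl_offset sigma alphas i | x <- nth [::] alphas i]
          | i <- iota 0 (size sigma)].

Definition query_complete (Ps : property -> Prop) : Prop :=
  forall (sigma : seq nat) (alphas betas : seq (seq nat)),
    is_perm sigma ->
    size alphas = size sigma -> size betas = size sigma ->
    (forall i, i < size sigma ->
       is_perm (nth [::] alphas i) /\ 0 < size (nth [::] alphas i) /\
       is_perm (nth [::] betas i) /\ 0 < size (nth [::] betas i)) ->
    (forall i, i < size sigma -> forall Q, Ps Q ->
       Q (nth [::] alphas i) = Q (nth [::] betas i)) ->
    forall P, Ps P -> P (inflate sigma alphas) = P (inflate sigma betas).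

From mathcomp Require Import all_boot all_fingroup zify.
Set Implicit Arguments. Unset Strict Implicit. Unset Printing Implicit Defensive.

(* Both properties are parities. The length of sigma[alpha_1, ..., alpha_m] is
   the sum of the lengths of the alpha_i. The sign of a permutation is the
   parity of its number of inversions, and the inversions of an inflation are
   those inside the blocks (order-isomorphic copies of the alpha_i) together
   with, for every pair i, j inverted by sigma, all |alpha_i| * |alpha_j| pairs
   across the two blocks. So the sign of the inflation only depends on sigma,
   on the parities of the alpha_i (EV) and on the parities of their lengths (EL). *)

Fixpoint inversions (s : seq nat) : nat :=
  if s is x :: s' then count (fun y => y < x) s' + inversions s' else 0.

Lemma inversions_map (f : nat -> nat) s :
  {in s &, {mono f : y z / y < z}} -> inversions (map f s) = inversions s.
Proof.
elim: s => //= x s IHs f_mono; rewrite IHs => [|y z sy sz]; last first.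
  by apply: f_mono; rewrite inE ?sy ?sz orbT.
congr (_ + _); rewrite count_map; apply: eq_in_count => y sy /=.
by apply: f_mono; rewrite inE ?sy ?eqxx ?orbT.
Qed.

Lemma count_ltn_iota x n : x <= n -> count (fun y => y < x) (iota 0 n) = x.
Proof.
move=> le_xn; rewrite -(subnKC le_xn) iotaD count_cat.
rewrite (@eq_in_count _ _ predT (iota 0 x)) => [|y]; last by rewrite mem_iota.
rewrite (@eq_in_count _ _ pred0 (iota (0 + x) _)) => [|y]; last first.
  by rewrite mem_iota => /andP[le_xy _] /=; lia.
by rewrite count_predT count_pred0 size_iota addn0.
Qed.

Definition seq_of_perm n (p : 'S_n) : seq nat := [seq val (p i) | i <- enum 'I_n].

Lemma perm_eq_seq_of_perm n (p : 'S_n) : perm_eq (seq_of_perm p) (iota 0 n).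
Proof.
rewrite /seq_of_perm (map_comp val p) -val_enum_ord; apply: perm_map.
apply: uniq_perm; rewrite ?(map_inj_uniq perm_inj) ?enum_uniq //.
by move=> i; rewrite mem_enum; apply/mapP; exists ((p^-1)%g i); rewrite ?mem_enum ?permKV.
Qed.

Lemma lift_perm_ord0 n (p : 'S_n.+1) : exists q : 'S_n, p = lift_perm ord0 (p ord0) q.
Proof.
pose f k := odflt k (unlift (p ord0) (p (lift ord0 k))).
have liftf k : lift (p ord0) (f k) = p (lift ord0 k).
  rewrite /f; case: unliftP => [j -> // | /perm_inj/eqP].
  by rewrite eq_sym (negbTE (neq_lift _ _)).
have f_inj : injective f.
  by move=> k k' /(congr1 (lift (p ord0))); rewrite !liftf => /perm_inj/lift_inj.
exists (perm f_inj); apply/permP => i.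
case: (unliftP ord0 i) => [k|] ->; first by rewrite lift_perm_lift permE liftf.
by rewrite lift_perm_id.
Qed.

Lemma seq_of_lift_perm n (j : 'I_n.+1) (q : 'S_n) :
  seq_of_perm (lift_perm ord0 j q) = val j :: map (bump j) (seq_of_perm q).
Proof.
rewrite /seq_of_perm enum_ordSl /= lift_perm_id -!map_comp; congr (_ :: _).
by apply: eq_map => k /=; rewrite lift_perm_lift.
Qed.

Lemma odd_perm_inversions n (p : 'S_n) : odd_perm p = odd (inversions (seq_of_perm p)).
Proof.
elim: n p => [|n IHn] p; first by rewrite (permS0 p) odd_perm1 /seq_of_perm enum_ord0.
(* The first entry j exceeds exactly j later entries, and removing it changes
   the sign by (-1)^j (odd_lift_perm). *)
have [q ->] := lift_perm_ord0 p; set j := p ord0.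
rewrite seq_of_lift_perm /= inversions_map => [|y z _ _]; last by rewrite !ltnNge leq_bump2.
have bump_ltn k : (bump j k < j) = (k < j) by rewrite /bump; case: leqP => /=; lia.
rewrite (seq.permP (perm_map (bump j) (perm_eq_seq_of_perm q))) count_map.
rewrite (eq_count bump_ltn) count_ltn_iota ?odd_lift_perm ?IHn ?oddD //.
by rewrite -ltnS.
Qed.

Lemma perm_of_seqE s : is_perm s -> forall i, perm_of_seq s i = nth 0 s i :> nat.
Proof.
move=> s_perm i; have s_uniq : uniq s by rewrite (perm_uniq s_perm) iota_uniq.
have nth_lt j : j < size s -> nth 0 s j < size s.
  by move=> /(mem_nth 0); rewrite (perm_mem s_perm) mem_iota.
have f_inj : injectiveb [ffun i : 'I_(size s) => (insubd i (nth 0 s i) : 'I_(size s))].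
  apply/injectiveP => a b; rewrite !ffunE => /(congr1 val); rewrite !val_insubd !nth_lt //.
  by move/eqP; rewrite nth_uniq // => /eqP/val_inj.
by rewrite /perm_of_seq -pvalE /= val_insubd f_inj ffunE val_insubd nth_lt.
Qed.

Lemma seq_of_perm_of_seq s : is_perm s -> seq_of_perm (perm_of_seq s) = s.
Proof.
move=> s_perm; rewrite /seq_of_perm (eq_map (perm_of_seqE s_perm)).
by rewrite (map_comp (nth 0 s) val) val_enum_ord -/(mkseq _ _) mkseq_nth.
Qed.

Lemma EV_inversions s : is_perm s -> EV s = ~~ odd (inversions s).
Proof. by move=> s_perm; rewrite /EV odd_perm_inversions seq_of_perm_of_seq. Qed.

Definition cross_inversions (a b : seq nat) : nat :=
  sumn [seq count (fun y => y < x) b | x <- a].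

Lemma inversions_cat a b :
  inversions (a ++ b) = inversions a + inversions b + cross_inversions a b.
Proof.
rewrite /cross_inversions; elim: a => /= [|x a ->]; first by rewrite addn0.
by rewrite count_cat; lia.
Qed.

Lemma cross_inversions_catr a b c :
  cross_inversions a (b ++ c) = cross_inversions a b + cross_inversions a c.
Proof.
by rewrite /cross_inversions; elim: a => //= x a ->; rewrite count_cat addnACA.
Qed.

Lemma cross_inversions_flattenr (I : Type) a (B : I -> seq nat) l :
  cross_inversions a (flatten (map B l)) = sumn [seq cross_inversions a (B j) | j <- l].
Proof.
elim: l => /= [|j l IHl]; last by rewrite cross_inversions_catr IHl.
by rewrite /cross_inversions; elim: a.
Qed.

Lemma cross_inversions_gt (a b : seq nat) :
  {in a & b, forall x y, y < x} -> cross_inversions a b = size a * size b.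
Proof.
rewrite /cross_inversions; elim: a => //= x a IHa gt_ab.
rewrite IHa => [|y z ay bz]; last by apply: gt_ab => //; rewrite inE ay orbT.
have /eqP -> : count (fun y => y < x) b == size b.
  by rewrite -all_count; apply/allP => y; apply: gt_ab; rewrite mem_head.
by rewrite mulSn.
Qed.

Lemma cross_inversions_le (a b : seq nat) :
  {in a & b, forall x y, x <= y} -> cross_inversions a b = 0.
Proof.
rewrite /cross_inversions; elim: a => //= x a IHa le_ab.
rewrite IHa => [|y z ay bz]; last by apply: le_ab => //; rewrite inE ay orbT.
apply/eqP; rewrite addn0 -leqn0 leqNgt -has_count; apply/hasPn => y bz.
by rewrite -leqNgt le_ab ?mem_head.
Qed.

Lemma eq_in_odd_sumn (I : eqType) (f g : I -> nat) l :
  {in l, forall i, odd (f i) = odd (g i)} -> odd (sumn (map f l)) = odd (sumn (map g l)).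
Proof.
elim: l => //= i l IHl fg; rewrite !oddD fg ?mem_head // IHl // => j lj.
by apply: fg; rewrite inE lj orbT.
Qed.

Lemma eq_in_odd_inversions_flatten (I : eqType) (A B : I -> seq nat) l : uniq l ->
  {in l, forall i, odd (inversions (A i)) = odd (inversions (B i))} ->
  {in l &, forall i j, i != j ->
     odd (cross_inversions (A i) (A j)) = odd (cross_inversions (B i) (B j))} ->
  odd (inversions (flatten (map A l))) = odd (inversions (flatten (map B l))).
Proof.
elim: l => //= i l IHl /andP[il l_uniq] AB_inv AB_cross.
have sub_l : {subset l <= i :: l} := @mem_behead _ (i :: l).
rewrite !inversions_cat !cross_inversions_flattenr !oddD AB_inv ?mem_head //.
rewrite (IHl l_uniq (sub_in1 sub_l AB_inv) (sub_in2 sub_l AB_cross)).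
congr (_ (+) _); apply: eq_in_odd_sumn => j lj.
by apply: AB_cross; rewrite ?mem_head ?sub_l //; apply: contraNneq il => ->.
Qed.

Lemma flatten_map_uniq (I T : eqType) (A : I -> seq T) l : uniq l ->
  {in l, forall i, uniq (A i)} ->
  {in l &, forall i j x, x \in A i -> x \in A j -> i = j} ->
  uniq (flatten (map A l)).
Proof.
elim: l => //= i l IHl /andP[il l_uniq] A_uniq A_disj.
have sub_l : {subset l <= i :: l} := @mem_behead _ (i :: l).
rewrite cat_uniq A_uniq ?mem_head // (IHl l_uniq (sub_in1 sub_l A_uniq) (sub_in2 sub_l A_disj)).
rewrite andbT; apply/hasPn => x /flattenP[_ /mapP[j lj ->] Ajx]; apply/negP => Aix.
by move: il; rewrite (A_disj i j (mem_head i l) (sub_l j lj) x Aix Ajx) lj.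
Qed.

Lemma leq_sumn_filter (f : nat -> nat) (P Q : pred nat) r i :
  uniq r -> i \in r -> Q i -> ~~ P i -> subpred P Q ->
  sumn [seq f j | j <- r & P j] + f i <= sumn [seq f j | j <- r & Q j].
Proof.
move=> r_uniq ri Qi Pi PQ; rewrite !sumnE !big_map !big_filter.
rewrite [leqRHS](bigID P) /= (eq_bigl P) => [|j]; last exact/andb_idl/PQ.
by rewrite leq_add2l big_mkcond (bigD1_seq i) //= Qi Pi leq_addr.
Qed.

Section Inflation.

Variable sigma : seq nat.
Hypothesis sigma_perm : is_perm sigma.

Local Notation m := (size sigma).

Definition block (alphas : seq (seq nat)) (i : nat) : seq nat :=
  [seq x + infl_offset sigma alphas i | x <- nth [::] alphas i].

Lemma inflateE alphas : inflate sigma alphas = flatten [seq block alphas i | i <- iota 0 m].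
Proof. by []. Qed.

Lemma size_inflate alphas :
  size (inflate sigma alphas) = sumn [seq size (nth [::] alphas i) | i <- iota 0 m].
Proof.
rewrite inflateE size_flatten /shape -map_comp.
by congr sumn; apply: eq_map => i /=; rewrite size_map.
Qed.

Section Blocks.

Variable alphas : seq (seq nat).
Hypothesis alphas_perm : forall i, i < m -> is_perm (nth [::] alphas i).

Local Notation n i := (size (nth [::] alphas i)).
Local Notation off i := (infl_offset sigma alphas i).

Lemma infl_offset_leq i j : i < m -> j < m -> nth 0 sigma i < nth 0 sigma j ->
  off i + n i <= off j.
Proof.
move=> lt_im lt_jm lt_ij; apply: leq_sumn_filter; rewrite ?iota_uniq ?mem_iota //=.
  by rewrite ltnn.
by move=> k /= /ltn_trans; apply.
Qed.

Lemma infl_offset_leq_size i : i < m -> off i + n i <= size (inflate sigma alphas).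
Proof.
move=> lt_im; rewrite size_inflate -(filter_predT (iota 0 m)).
by apply: leq_sumn_filter; rewrite ?iota_uniq ?mem_iota //= ltnn.
Qed.

Lemma mem_block i x : i < m -> x \in block alphas i -> off i <= x < off i + n i.
Proof.
move=> lt_im /mapP[y + ->]; rewrite (perm_mem (alphas_perm lt_im)) mem_iota /=; lia.
Qed.

Lemma block_sigma_lt i j x y : i < m -> j < m -> nth 0 sigma i < nth 0 sigma j ->
  x \in block alphas i -> y \in block alphas j -> x < y.
Proof.
move=> lt_im lt_jm lt_ij /(mem_block lt_im) xi /(mem_block lt_jm) yj.
by have := infl_offset_leq lt_im lt_jm lt_ij; lia.
Qed.

Lemma sigma_neq i j : i < m -> j < m -> i != j -> nth 0 sigma i != nth 0 sigma j.
Proof. by move=> lt_im lt_jm; rewrite nth_uniq // (perm_uniq sigma_perm) iota_uniq. Qed.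

Lemma cross_inversions_block i j : i < m -> j < m -> i != j ->
  cross_inversions (block alphas i) (block alphas j) =
  if nth 0 sigma j < nth 0 sigma i then n i * n j else 0.
Proof.
move=> lt_im lt_jm neq_ij; case: ltngtP (sigma_neq lt_im lt_jm neq_ij) => // lt_ji _.
- rewrite cross_inversions_gt ?size_map // => x y xi yj.
  exact: (block_sigma_lt lt_jm lt_im lt_ji).
- apply: cross_inversions_le => x y xi yj.
  exact/ltnW/(block_sigma_lt lt_im lt_jm lt_ji).
Qed.

Lemma inflate_perm : is_perm (inflate sigma alphas).
Proof.
have inflate_uniq : uniq (inflate sigma alphas).
  apply: flatten_map_uniq; first exact: iota_uniq.
    move=> i; rewrite mem_iota => lt_im; rewrite map_inj_uniq; last exact: addIn.
    by rewrite (perm_uniq (alphas_perm lt_im)) iota_uniq.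
  move=> i j; rewrite !mem_iota /= => lt_im lt_jm x xi xj; apply/eqP.
  apply: contraT => /(sigma_neq lt_im lt_jm); case: ltngtP => // lt_ij _.
    by have := block_sigma_lt lt_im lt_jm lt_ij xi xj; rewrite ltnn.
  by have := block_sigma_lt lt_jm lt_im lt_ij xj xi; rewrite ltnn.
have inflate_sub : {subset inflate sigma alphas <= iota 0 (size (inflate sigma alphas))}.
  move=> x /flattenP[_ /mapP[i + ->]]; rewrite mem_iota /= => lt_im /(mem_block lt_im).
  by have := infl_offset_leq_size lt_im; rewrite mem_iota; lia.
have [_ eq_inflate] := uniq_min_size inflate_uniq inflate_sub (eq_leq (size_iota _ _)).
exact: uniq_perm inflate_uniq (iota_uniq _ _) eq_inflate.
Qed.

End Blocks.

Lemma EV_inflate_congr alphas betas :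
  (forall i, i < m -> is_perm (nth [::] alphas i)) ->
  (forall i, i < m -> is_perm (nth [::] betas i)) ->
  (forall i, i < m -> EV (nth [::] alphas i) = EV (nth [::] betas i)) ->
  (forall i, i < m -> EL (nth [::] alphas i) = EL (nth [::] betas i)) ->
  EV (inflate sigma alphas) = EV (inflate sigma betas).
Proof.
move=> alphas_perm betas_perm EV_ab EL_ab.
rewrite !EV_inversions ?inflate_perm // !inflateE; congr negb.
apply: eq_in_odd_inversions_flatten; first exact: iota_uniq.
- move=> i; rewrite mem_iota => lt_im.
  rewrite !inversions_map => [|y z _ _|y z _ _]; rewrite ?ltn_add2r //.
  by apply: negb_inj; rewrite -!EV_inversions ?alphas_perm ?betas_perm ?EV_ab.
- move=> i j; rewrite !mem_iota => lt_im lt_jm neq_ij.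
  rewrite !cross_inversions_block //; case: ifP => // _.
  by rewrite !oddM; congr (_ && _); apply/negb_inj/EL_ab.
Qed.

Lemma EL_inflate_congr alphas betas :
  (forall i, i < m -> EL (nth [::] alphas i) = EL (nth [::] betas i)) ->
  EL (inflate sigma alphas) = EL (inflate sigma betas).
Proof.
move=> EL_ab; rewrite /EL !size_inflate; congr negb.
by apply: eq_in_odd_sumn => i; rewrite mem_iota => lt_im; apply/negb_inj/EL_ab.
Qed.

End Inflation.

Theorem lemma4p3 : query_complete (fun P => P = EV \/ P = EL).
Proof.
move=> sigma alphas betas sigma_perm _ _ blocks_perm same_answers P.
have EV_ab i : i < size sigma -> EV (nth [::] alphas i) = EV (nth [::] betas i).
  by move=> lt_im; apply: same_answers => //=; left.
have EL_ab i : i < size sigma -> EL (nth [::] alphas i) = EL (nth [::] betas i).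
  by move=> lt_im; apply: same_answers => //=; right.
case=> ->; last exact: EL_inflate_congr.
by apply: EV_inflate_congr => // i /blocks_perm => [[]|[_ [_ []]]].
Qed.
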